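(* For every $n\geq 1$, there exists a signed digraph $G$ on $[n]$ such that every nilpotent $G$-function $f:\{0,1,2\}^n\to\{0,1,2\}^n$ has class at least $\lfloor\log_2 n\rfloor+2$. Furthermore, if $n=2^{\lfloor\log_2 n\rfloor+1}-1$, then such a $G$ can be chosen strongly connected.
   Context: A signed digraph is a digraph (loops allowed, no multiple arcs) in which each arc is labeled positive, negative, or null (unsigned). For a finite interval of integers $A$, a function over $A$ is a map $f:A^n\to A^n$; $f^0=\mathrm{id}$, $f^k=f\circ f^{k-1}$. The interaction graph $G(f)$ is the signed digraph on $[n]$ with an arc $(j,i)$ iff $f_i(a)\neq f_i(b)$ for some $a,b\in A^n$ with $a_j<b_j$ and $a_\ell=b_\ell$ for $\ell\neq j$; the arc is positive if $f_i(a)\leq f_i(b)$ for all such pairs, negative if $f_i(a)\geq f_i(b)$ for all such pairs, and null otherwise. $f$ is a $G$-function if $G(f)=G$. $f$ is nilpotent if $f^k$ is constant for some $k\geq 0$; the least such $k$ is its class. *)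

From HB Require Import structures.
From mathcomp Require Import all_boot all_order.
Set Implicit Arguments. Unset Strict Implicit. Unset Printing Implicit Defensive.

Inductive sign := Pos | Neg | Null.
Definition sign_eqb (s t : sign) : bool :=
  match s, t with Pos, Pos | Neg, Neg | Null, Null => true | _, _ => false end.
Lemma sign_eqP : Equality.axiom sign_eqb.
Proof. by case; case; constructor. Qed.
HB.instance Definition _ := hasDecEq.Build sign sign_eqP.

(* A signed digraph on [n] (vertices 'I_n, loops allowed, no multiple arcs):
   G (j, i) = None if there is no arc (j,i), Some s if the arc (j,i) has sign s. *)
Definition sdigraph (n : nat) := {ffun 'I_n * 'I_n -> option sign}.

Definition A3 := 'I_3.
Definition config (n : nat) := {ffun 'I_n -> A3}.
Definition fun3 (n : nat) := config n -> config n.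

Definition jpair n (j : 'I_n) (a b : config n) : bool :=
  (a j < b j) && [forall l, (l != j) ==> (a l == b l)].

Definition interaction_graph n (f : fun3 n) : sdigraph n :=
  [ffun p : 'I_n * 'I_n =>
     let j := p.1 in let i := p.2 in
     if ~~ [exists a, exists b, jpair j a b && (f a i != f b i)] then None
     else if [forall a, forall b, jpair j a b ==> (f a i <= f b i)] then Some Pos
     else if [forall a, forall b, jpair j a b ==> (f b i <= f a i)] then Some Neg
     else Some Null].

Definition is_G_function n (G : sdigraph n) (f : fun3 n) := interaction_graph f = G.

Definition iter_const n (f : fun3 n) (k : nat) : bool :=
  [exists c : config n, [forall x : config n, iter k f x == c]].

Definition nilpotent n (f : fun3 n) : Prop := exists k, iter_const f k.

Definition nil_class n (f : fun3 n) (h : nilpotent f) : nat := ex_minn h.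

Definition arc_rel n (G : sdigraph n) : rel 'I_n := fun j i => G (j, i) != None.
Definition strongly_connected n (G : sdigraph n) : Prop :=
  forall i j : 'I_n, connect (arc_rel G) i j.

Definition class_lower_bound n (G : sdigraph n) : Prop :=
  forall f : fun3 n, is_G_function G f ->
  forall h : nilpotent f, trunc_log 2 n + 2 <= nil_class h.

From mathcomp Require Import all_boot all_order zify.
Set Implicit Arguments. Unset Strict Implicit. Unset Printing Implicit Defensive.

(* Index the vertices as a binary heap in which vertex j has exactly two children,
   2j+1 through a positive arc and 2j+2 through a null arc, each child having no other
   in-arc.  Coordinate i of f then only depends on its parent c through a local map
   A3 -> A3, which is nondecreasing and nonconstant for a positive arc and neither
   nondecreasing nor nonincreasing for a null arc; on {0,1,2} two such maps are jointly
   injective.  Hence if coordinate c of f^t is nonconstant, so is the coordinate of one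
   of its children in f^(t+1), and nonconstancy travels down the heap one level per
   step, so that the class exceeds the time at which it reaches the bottom.
   For arbitrary n the root is fed positively by a vertex with a null self-loop: if the
   root were constant at time 2, the non-monotone loop map would have to permute a
   two-point set, which is impossible for a nilpotent f.  When n = 2^(m+1) - 1 the heap
   fills all vertices, and sending its leaves back to the root makes it strongly
   connected. *)

Definition v0 : A3 := @Ordinal 3 0 isT.
Definition v1 : A3 := @Ordinal 3 1 isT.
Definition v2 : A3 := @Ordinal 3 2 isT.

Lemma A3_cases (x : A3) : [\/ x = v0, x = v1 | x = v2].
Proof.
by case: x => -[|[|[|k]]] lt_x //; [apply: Or31 | apply: Or32 | apply: Or33]; apply: val_inj.
Qed.

Lemma homo_leq3P (h : A3 -> A3) :
  reflect {homo h : a b / a <= b} (h v0 <= h v1 <= h v2).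
Proof.
apply: (iffP andP) => [[h01 h12] a b | mono]; last by split; apply: mono.
by case: (A3_cases a) => ->; case: (A3_cases b) => -> //=; lia.
Qed.

Lemma homo_geq3P (h : A3 -> A3) :
  reflect {homo h : a b /~ a <= b} (h v2 <= h v1 <= h v0).
Proof.
apply: (iffP andP) => [[h21 h10] a b | anti]; last by split; apply: anti.
by case: (A3_cases a) => ->; case: (A3_cases b) => -> //=; lia.
Qed.

Lemma nondecreasing3_nonconst (h : A3 -> A3) (a b : A3) :
  h v0 <= h v1 <= h v2 -> h a != h b -> h v0 < h v2.
Proof.
rewrite -(inj_eq val_inj).
by case: (A3_cases a) => ->; case: (A3_cases b) => -> //=; rewrite ?eqxx //; lia.
Qed.

(* A nondecreasing nonconstant map identifies at most an adjacent pair {0,1} or {1,2},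
   and a map identifying an adjacent pair is monotone. *)
Lemma pos_null_pair_injective (h k : A3 -> A3) :
  h v0 <= h v1 <= h v2 -> h v0 < h v2 ->
  ~~ (k v0 <= k v1 <= k v2) -> ~~ (k v2 <= k v1 <= k v0) ->
  injective (fun a => (h a, k a)).
Proof.
move=> h_up h_nc k_nup k_ndown u w [/(congr1 val) huw /(congr1 val) kuw].
by case: (A3_cases u) huw kuw => ->; case: (A3_cases w) => -> //= *; exfalso; lia.
Qed.

Lemma iter_neq_two_point_image (T : eqType) (g : T -> T) (x y : T) :
  (forall z, g z \in [:: x; y]) -> g x != g y -> forall k, iter k g x != iter k g y.
Proof.
move=> img gxy.
have sep a b : a \in [:: x; y] -> b \in [:: x; y] -> a != b -> g a != g b.
  by rewrite !inE => /orP[]/eqP-> /orP[]/eqP->; rewrite ?eqxx // => _; rewrite eq_sym.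
have mem k z : z \in [:: x; y] -> iter k g z \in [:: x; y] by case: k => [|k] //= _.
have xy : x != y by apply: contraNneq gxy => ->.
by elim=> [|k IH] //=; apply: sep; rewrite // mem // !inE eqxx ?orbT.
Qed.

(* As h 0 < h 2, h (g a) = h (g b) forces |g a - g b| <= 1; a non-monotone g with such
   values has the shape (x, y, x) with |x - y| = 1, so it maps {x, y} onto itself. *)
Lemma null_pos_comp_const_iter_neq (g h : A3 -> A3) :
  ~~ (g v0 <= g v1 <= g v2) -> ~~ (g v2 <= g v1 <= g v0) ->
  h v0 <= h v1 <= h v2 -> h v0 < h v2 -> (forall a b, h (g a) = h (g b)) ->
  forall k, iter k g (g v0) != iter k g (g v1).
Proof.
move=> g_nup g_ndown h_up h_nc hg.
have close a b : g a <= (g b).+1.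
  rewrite leqNgt; apply/negP => gap; have := hg a b.
  have [-> ->] : g a = v2 /\ g b = v0.
    by split; apply: val_inj; have := ltn_ord (g a); rewrite /=; lia.
  by move/(congr1 val) => /=; lia.
have := close v0 v1; have := close v1 v0; have := close v0 v2; have := close v2 v0.
have := close v1 v2; have := close v2 v1 => c21 c12 c20 c02 c10 c01.
have g20 : g v2 = g v0 by apply: val_inj => /=; lia.
apply: iter_neq_two_point_image => [z | ].
  by case: (A3_cases z) => ->; rewrite ?g20 !inE eqxx ?orbT.
case: (A3_cases (g v0)) => e0; case: (A3_cases (g v1)) => e1;
  rewrite e0 e1 ?g20 ?e0 ?e1 //; move: c01 c10 g_nup g_ndown; rewrite g20 e0 e1 /=; lia.
Qed.

Definition sole_in_arc n (G : sdigraph n) (c i : 'I_n) (s : sign) : Prop :=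
  G (c, i) = Some s /\ forall j, j != c -> G (j, i) = None.

Section Dynamics.
Variables (n : nat) (f : fun3 n).

Lemma interaction_graph_None_eq (j i : 'I_n) :
  interaction_graph f (j, i) = None -> forall a b, jpair j a b -> f a i = f b i.
Proof.
rewrite ffunE /=; case: ifP => [no_change _ a b ab | _]; last by case: ifP => // _; case: ifP.
by apply/eqP; move/existsPn: no_change => /(_ a) /existsPn => /(_ b); rewrite ab negbK.
Qed.

Lemma interaction_graph_Pos_le (j i : 'I_n) :
  interaction_graph f (j, i) = Some Pos -> forall a b, jpair j a b -> f a i <= f b i.
Proof.
rewrite ffunE /=; case: ifP => // _; case: ifP => [/forallP up _ a b | _]; last by case: ifP.
by move/forallP: (up a) => /(_ b) /implyP.
Qed.

Lemma interaction_graph_Null_nmono (j i : 'I_n) : interaction_graph f (j, i) = Some Null ->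
  ~~ [forall a, forall b, jpair j a b ==> (f a i <= f b i)] /\
  ~~ [forall a, forall b, jpair j a b ==> (f b i <= f a i)].
Proof. by rewrite ffunE /=; case: ifP => // _; do 2 case: ifP => //. Qed.

Lemma interaction_graph_arc_neq (j i : 'I_n) :
  interaction_graph f (j, i) != None -> exists a b, f a i != f b i.
Proof.
rewrite ffunE /=; case: ifP => // /negbFE /existsP[a /existsP[b /andP[_ ab]]] _.
by exists a, b.
Qed.

Lemma noarc_coord_indep (j i : 'I_n) : interaction_graph f (j, i) = None ->
  forall a b : config n, (forall l, l != j -> a l = b l) -> f a i = f b i.
Proof.
move=> /interaction_graph_None_eq eq_jpair.
suff lt_case (a b : config n) : (forall l, l != j -> a l = b l) -> a j < b j -> f a i = f b i.
  move=> a b ab; case: (ltngtP (a j) (b j)) => [ | ba | eq_j].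
  - exact: lt_case.
  - by symmetry; apply: lt_case => // l /ab ->.
  - congr (f _ i); apply/ffunP => l.
    by case: (eqVneq l j) => [-> | /ab //]; apply: val_inj.
move=> ab lt_j; apply: eq_jpair; rewrite /jpair lt_j.
by apply/forallP => l; apply/implyP => /ab ->.
Qed.

Lemma noarcs_coord_indep (i : 'I_n) (s : seq 'I_n) :
  (forall j, j \in s -> interaction_graph f (j, i) = None) ->
  forall a b : config n, (forall l, l \notin s -> a l = b l) -> f a i = f b i.
Proof.
elim: s => [|j s IH] noarc a b ab; first by congr (f _ i); apply/ffunP => l; apply: ab.
pose c : config n := [ffun l => if l == j then b l else a l].
transitivity (f c i).
  apply: (noarc_coord_indep (noarc j (mem_head _ _))) => l /negbTE lj.
  by rewrite ffunE lj.
apply: IH => [k ks | l ls]; first by apply: noarc; rewrite inE ks orbT.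
rewrite ffunE; case: eqP => [-> // | /eqP lj].
by apply: ab; rewrite inE negb_or lj.
Qed.

Definition local_map (i : 'I_n) (v : A3) : A3 := f [ffun => v] i.

Lemma sole_in_arc_local (c i : 'I_n) s : sole_in_arc (interaction_graph f) c i s ->
  forall x, f x i = local_map i (x c).
Proof.
move=> [_ noarc] x; apply: (@noarcs_coord_indep i (enum (predC1 c))) => [j | l].
  by rewrite mem_enum inE; apply: noarc.
by rewrite mem_enum inE negbK => /eqP ->; rewrite ffunE.
Qed.

Definition pinned (c : 'I_n) (u : A3) : config n := [ffun l => if l == c then u else v0].

Lemma jpair_pinned (c : 'I_n) (u w : A3) : u < w -> jpair c (pinned c u) (pinned c w).
Proof.
move=> uw; rewrite /jpair !ffunE eqxx uw.
by apply/forallP => l; apply/implyP => /negbTE lc; rewrite !ffunE lc.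
Qed.

Lemma sole_Pos_local (c i : 'I_n) : sole_in_arc (interaction_graph f) c i Pos ->
  local_map i v0 <= local_map i v1 <= local_map i v2 /\ local_map i v0 < local_map i v2.
Proof.
move=> arc; have loc := sole_in_arc_local arc; have [arc_ci _] := arc.
have step (u w : A3) : u < w -> local_map i u <= local_map i w.
  move=> uw; have := interaction_graph_Pos_le arc_ci (jpair_pinned c uw).
  by rewrite !loc !ffunE eqxx.
have chain : local_map i v0 <= local_map i v1 <= local_map i v2 by rewrite !step.
have [|a [b ab]] := @interaction_graph_arc_neq c i; first by rewrite arc_ci.
by split=> //; apply: (nondecreasing3_nonconst (a := a c) (b := b c) chain); rewrite -!loc.
Qed.

Lemma sole_Null_local (c i : 'I_n) : sole_in_arc (interaction_graph f) c i Null ->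
  ~~ (local_map i v0 <= local_map i v1 <= local_map i v2) /\
  ~~ (local_map i v2 <= local_map i v1 <= local_map i v0).
Proof.
move=> arc; have loc := sole_in_arc_local arc.
have [/interaction_graph_Null_nmono [not_up not_down] _] := arc.
split; [apply: contra not_up => /homo_leq3P mono | apply: contra not_down => /homo_geq3P anti];
  apply/forallP => a; apply/forallP => b; apply/implyP => /andP[ab _]; rewrite !loc.
- exact: mono (ltnW ab).
- exact: anti (ltnW ab).
Qed.

Definition nonconst_coord (t : nat) (i : 'I_n) : bool :=
  [exists x, exists y, iter t f x i != iter t f y i].

Lemma nonconst_coord_nil_class (nil_f : nilpotent f) t i :
  nonconst_coord t i -> t < nil_class nil_f.
Proof.
move=> /existsP[x /existsP[y xy]]; rewrite /nil_class; case: ex_minnP => k.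
move=> /existsP[c /forallP const] _; rewrite ltnNge; apply/negP => kt.
by move: xy; rewrite -(subnK kt) !iterD (eqP (const x)) (eqP (const y)) eqxx.
Qed.

Lemma arc_nonconst_coord (j i : 'I_n) :
  interaction_graph f (j, i) != None -> nonconst_coord 1 i.
Proof.
move=> /interaction_graph_arc_neq[a [b ab]].
by apply/existsP; exists a; apply/existsP; exists b.
Qed.

Lemma nonconst_coord_children (c i1 i2 : 'I_n) t :
  sole_in_arc (interaction_graph f) c i1 Pos -> sole_in_arc (interaction_graph f) c i2 Null ->
  nonconst_coord t c -> nonconst_coord t.+1 i1 || nonconst_coord t.+1 i2.
Proof.
move=> arc1 arc2 /existsP[x /existsP[y xy]].
have [h_up h_nc] := sole_Pos_local arc1; have [k_nup k_ndown] := sole_Null_local arc2.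
have inj := pos_null_pair_injective h_up h_nc k_nup k_ndown.
case: (eqVneq (iter t.+1 f x i1) (iter t.+1 f y i1)) => [e1 | ne1].
  apply/orP; right; apply/existsP; exists x; apply/existsP; exists y.
  apply: contra xy => /eqP e2; apply/eqP/inj.
  rewrite !iterS !(sole_in_arc_local arc1) in e1.
  by rewrite !iterS !(sole_in_arc_local arc2) in e2; rewrite /= e1 e2.
by apply/orP; left; apply/existsP; exists x; apply/existsP; exists y.
Qed.

Lemma null_loop_pos_arc_nonconst_coord (s r : 'I_n) : nilpotent f ->
  sole_in_arc (interaction_graph f) s s Null -> sole_in_arc (interaction_graph f) s r Pos ->
  nonconst_coord 2 r.
Proof.
move=> [k /existsP[c /forallP const]] loop arc.
have [g_nup g_ndown] := sole_Null_local loop; have [h_up h_nc] := sole_Pos_local arc.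
have iter_s t x : iter t f x s = iter t (local_map s) (x s).
  by elim: t => //= t IH; rewrite (sole_in_arc_local loop) IH.
apply: contraT => const_r.
have hg a b : local_map r (local_map s a) = local_map r (local_map s b).
  apply/eqP; apply: contraNT const_r => ne; apply/existsP; exists [ffun => a].
  by apply/existsP; exists [ffun => b]; rewrite !iterS !(sole_in_arc_local arc).
have := null_pos_comp_const_iter_neq g_nup g_ndown h_up h_nc hg k.
have := iter_s k [ffun => local_map s v0]; have := iter_s k [ffun => local_map s v1].
by rewrite !ffunE => <- <-; rewrite (eqP (const _)) (eqP (const _)) eqxx.
Qed.

End Dynamics.

Definition heap_graph n (N : nat) (extra : nat -> nat -> option sign) : sdigraph n :=
  [ffun p : 'I_n * 'I_n => let j : nat := p.1 in let i : nat := p.2 in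
    if 0 < i < N then
      if i == 2 * j + 1 then Some Pos else if i == 2 * j + 2 then Some Null else None
    else extra j i].

Lemma heap_graph_extra n N extra (j i : 'I_n) :
  ~~ (0 < i < N) -> heap_graph n N extra (j, i) = extra j i.
Proof. by rewrite ffunE /= => /negbTE ->. Qed.

Lemma heap_graph_left n N extra (j i : 'I_n) :
  i = 2 * j + 1 :> nat -> i < N -> sole_in_arc (heap_graph n N extra) j i Pos.
Proof.
move=> ij iN; have inner : 0 < i < N by rewrite iN ij addn1.
rewrite /sole_in_arc ffunE /= inner ij eqxx; split=> // k kj.
have {}kj : (k : nat) != j by [].
by rewrite ffunE /= inner ifF ?ifF //; apply/eqP; lia.
Qed.

Lemma heap_graph_right n N extra (j i : 'I_n) :
  i = 2 * j + 2 :> nat -> i < N -> sole_in_arc (heap_graph n N extra) j i Null.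
Proof.
move=> ij iN; have inner : 0 < i < N by rewrite iN ij addn2.
rewrite /sole_in_arc ffunE /= inner ij eqxx ifF; last by apply/eqP; lia.
split=> // k kj; have {}kj : (k : nat) != j by [].
by rewrite ffunE /= inner ifF ?ifF //; apply/eqP; lia.
Qed.

Lemma heap_graph_nonconst_coord n (f : fun3 n) N extra D t (r : 'I_n) :
  interaction_graph f = heap_graph n N extra -> 2 ^ D.+1 - 1 <= N <= n ->
  r = 0 :> nat -> nonconst_coord f t r -> exists i, nonconst_coord f (t + D) i.
Proof.
move=> Gf /andP[DN Nn] r0 root.
suff [i _ nc_i] : exists2 i : 'I_n, i < 2 ^ D.+1 - 1 & nonconst_coord f (t + D) i by exists i.
elim: D DN => [_ | d IH dN]; first by exists r; rewrite ?r0 ?addn0.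
have [|i lt_i nc_i] := IH; first by move: dN; rewrite (expnS 2 d.+1); lia.
move: dN lt_i; rewrite !expnS => dN lt_i.
have lt1 : 2 * i + 1 < N by lia.
have lt2 : 2 * i + 2 < N by lia.
pose i1 : 'I_n := Ordinal (leq_trans lt1 Nn); pose i2 : 'I_n := Ordinal (leq_trans lt2 Nn).
have arc1 : sole_in_arc (interaction_graph f) i i1 Pos.
  by rewrite Gf; apply: heap_graph_left.
have arc2 : sole_in_arc (interaction_graph f) i i2 Null.
  by rewrite Gf; apply: heap_graph_right.
case/orP: (nonconst_coord_children arc1 arc2 nc_i) => nc; [exists i1 | exists i2];
  rewrite ?addnS //= ?expnS; lia.
Qed.

Definition gadget_heap_graph n : sdigraph n :=
  let T := 2 ^ trunc_log 2 n - 1 in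
  heap_graph n T (fun j i =>
    if j == T then if i == T then Some Null else if i == 0 then Some Pos else None else None).

Lemma gadget_heap_graph_loop n (s : 'I_n) :
  s = 2 ^ trunc_log 2 n - 1 :> nat -> sole_in_arc (gadget_heap_graph n) s s Null.
Proof.
move=> s_eq; rewrite /sole_in_arc heap_graph_extra s_eq ?ltnn ?andbF //= eqxx.
split=> // j js; have {}js : (j : nat) != s by [].
by rewrite heap_graph_extra s_eq ?ltnn ?andbF //= -s_eq (negbTE js).
Qed.

Lemma gadget_heap_graph_root n (s r : 'I_n) :
  s = 2 ^ trunc_log 2 n - 1 :> nat -> r = 0 :> nat -> 0 < s ->
  sole_in_arc (gadget_heap_graph n) s r Pos.
Proof.
move=> s_eq r0 s_gt0; rewrite /sole_in_arc heap_graph_extra r0 //= -s_eq eqxx.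
rewrite ifF; last by apply/eqP; lia.
split=> // j js; have {}js : (j : nat) != s by [].
by rewrite heap_graph_extra r0 //= -s_eq (negbTE js).
Qed.

Lemma gadget_heap_graph_class_lower_bound n :
  0 < n -> class_lower_bound (gadget_heap_graph n).
Proof.
move=> n_gt0 f Gf nil_f; set m := trunc_log 2 n.
have lt_s : 2 ^ m - 1 < n by have := trunc_logP (isT : 1 < 2) n_gt0; rewrite -/m; lia.
pose s : 'I_n := Ordinal lt_s; pose r : 'I_n := Ordinal n_gt0.
have loop : sole_in_arc (interaction_graph f) s s Null.
  by rewrite Gf; exact: gadget_heap_graph_loop.
have [m0 | m_gt0] := posnP m.
  have /nonconst_coord_nil_class : nonconst_coord f 1 s.
    by apply: (arc_nonconst_coord (j := s)); rewrite loop.1.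
  by move/(_ nil_f); rewrite m0.
have s_gt0 : 0 < 2 ^ m - 1 by have := leq_pexp2l (isT : 0 < 2) m_gt0; rewrite expn1; lia.
have arc : sole_in_arc (interaction_graph f) s r Pos.
  by rewrite Gf; exact: gadget_heap_graph_root.
have root := null_loop_pos_arc_nonconst_coord nil_f loop arc.
have [|i /nonconst_coord_nil_class] :=
  heap_graph_nonconst_coord (D := m.-1) Gf _ (erefl : r = 0 :> nat) root.
  by rewrite prednK // -/m leqnn ltnW.
by move/(_ nil_f); lia.
Qed.

Definition cyclic_heap_graph n : sdigraph n :=
  heap_graph n n (fun j i => if (i == 0) && (n <= 2 * j + 1) then Some Pos else None).

Lemma cyclic_heap_graph_leaf n (j r : 'I_n) :
  n <= 2 * j + 1 -> r = 0 :> nat -> cyclic_heap_graph n (j, r) = Some Pos.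
Proof. by move=> leaf r0; rewrite heap_graph_extra r0 //= leaf. Qed.

Lemma cyclic_heap_graph_strongly_connected n : strongly_connected (cyclic_heap_graph n).
Proof.
move=> i j; have n_gt0 : 0 < n by case: i => i; lia.
pose r : 'I_n := Ordinal n_gt0; set G := cyclic_heap_graph n.
have arc_left (p c : 'I_n) : c = 2 * p + 1 :> nat -> arc_rel G p c.
  by move=> cp; rewrite /arc_rel (heap_graph_left _ cp (ltn_ord c)).1.
have arc_right (p c : 'I_n) : c = 2 * p + 2 :> nat -> arc_rel G p c.
  by move=> cp; rewrite /arc_rel (heap_graph_right _ cp (ltn_ord c)).1.
have down (x : 'I_n) : connect (arc_rel G) r x.
  case: x => k; elim/ltn_ind: k => -[_ | k IH] lt_k.
    by rewrite (_ : Ordinal lt_k = r) //; apply: val_inj.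
  have lt_p : k./2 < n by move: lt_k; rewrite -[k in k.+1]odd_double_half; lia.
  apply: connect_trans (IH _ _ lt_p) (connect1 _).
    by move: lt_k; rewrite -{2}[k]odd_double_half; lia.
  have k_eq := odd_double_half k.
  by case: (odd k) k_eq => /= k_eq; [apply: arc_right | apply: arc_left] => /=; lia.
have up (x : 'I_n) : connect (arc_rel G) x r.
  case: x => k lt_k; have [d] := ubnP (n - k); elim: d k lt_k => // d IH k lt_k lt_d.
  have [lt_c | leaf] := ltnP (2 * k + 1) n.
    apply: connect_trans (connect1 _) (IH _ lt_c _); last by lia.
    by apply: (arc_left _ (Ordinal lt_c)).
  by apply: connect1; rewrite /arc_rel cyclic_heap_graph_leaf.
exact: connect_trans (up i) (down j).
Qed.

Lemma cyclic_heap_graph_class_lower_bound n :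
  0 < n -> n = 2 ^ (trunc_log 2 n).+1 - 1 -> class_lower_bound (cyclic_heap_graph n).
Proof.
move=> n_gt0 n_full f Gf nil_f; set m := trunc_log 2 n in n_full *.
have lt_last : n.-1 < n by lia.
pose r : 'I_n := Ordinal n_gt0.
have root : nonconst_coord f 1 r.
  apply: (arc_nonconst_coord (j := Ordinal lt_last)).
  by rewrite Gf cyclic_heap_graph_leaf //=; lia.
have [|i /nonconst_coord_nil_class] :=
  heap_graph_nonconst_coord (D := m) Gf _ (erefl : r = 0 :> nat) root.
  by rewrite -n_full !leqnn.
by move/(_ nil_f); lia.
Qed.

Unset Implicit Arguments.

Theorem proposition5 (n : nat) : 1 <= n ->
  (exists G : sdigraph n, class_lower_bound G) /\
  (n = 2 ^ (trunc_log 2 n).+1 - 1 ->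
     exists G : sdigraph n, class_lower_bound G /\ strongly_connected G).
Proof.
move=> n_gt0; split.
  by exists (gadget_heap_graph n); exact: gadget_heap_graph_class_lower_bound.
move=> n_full; exists (cyclic_heap_graph n); split.
  exact: cyclic_heap_graph_class_lower_bound.
exact: cyclic_heap_graph_strongly_connected.
Qed.
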